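(* $\mathfrak{L}(\mathrm{rtDBVA}(1))\subsetneq\mathfrak{L}(\mathrm{rtDBVA}(2))$.
   Context: $\mathfrak{L}(A)$ denotes the class of languages recognized by machines of type $A$. A real-time deterministic blind vector automaton of dimension $k$ ($\mathrm{rtDBVA}(k)$) is a 6-tuple $(Q,\Sigma,\delta,q_0,Q_a,v)$ with finite state set $Q$, initial state $q_0$, accept states $Q_a$, initial row vector $v\in\mathbb{Q}^k$ (freely chosen), and $\delta:Q\times(\Sigma\cup\{\cent,\$\})\to Q\times S$, $S$ the set of $k\times k$ rational matrices; the input $w$ is read as $\cent w\$$ left to right, one symbol per step, and $\delta(q,\sigma)=(q',M)$ means that in state $q$ reading $\sigma$ the machine goes to $q'$ and multiplies its row vector on the right by $M$. The input is accepted iff after processing $\$$ the state is in $Q_a$ and the first vector entry equals $1$. *)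

From HB Require Import structures.
From mathcomp Require Import all_boot all_order all_algebra.
Set Implicit Arguments. Unset Strict Implicit. Unset Printing Implicit Defensive.
Import Order.TTheory GRing.Theory Num.Theory.
Local Open Scope ring_scope.

Inductive tape_sym (Sigma : Type) := Cent | Dollar | Sym of Sigma.
Arguments Cent {Sigma}. Arguments Dollar {Sigma}.

(* Real-time deterministic blind vector automaton of dimension k over Sigma,
   with rational entries:  (Q, Sigma, delta, q0, Qa, v). *)
Record rtDBVA (Sigma : Type) (k : nat) := RtDBVA {
  st : finType;
  delta : st -> tape_sym Sigma -> st * 'M[rat]_k;
  q0 : st;
  Qa : {set st};
  v0 : 'rV[rat]_k
}.

Definition step (Sigma : Type) k (M : rtDBVA Sigma k)
  (c : st M * 'rV[rat]_k) (a : tape_sym Sigma) : st M * 'rV[rat]_k :=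
  let: (q, v) := c in let: (q', A) := @delta Sigma k M q a in (q', v *m A).

Definition run (Sigma : Type) k (M : rtDBVA Sigma k) (w : seq Sigma)
  : st M * 'rV[rat]_k :=
  foldl (@step Sigma k M) (@q0 Sigma k M, @v0 Sigma k M) (Cent :: map (@Sym Sigma) w ++ [:: Dollar]).

Definition accepts (Sigma : Type) k (M : rtDBVA Sigma k) (w : seq Sigma) : Prop :=
  (run M w).1 \in @Qa Sigma k M /\
  exists i : 'I_k, nat_of_ord i = 0%N /\ (run M w).2 0 i = 1.

Definition rtDBVA_lang (Sigma : Type) (k : nat) (L : seq Sigma -> Prop) : Prop :=
  exists M : rtDBVA Sigma k, forall w, L w <-> accepts M w.

From mathcomp Require Import all_boot all_order all_algebra.
From Stdlib Require Import Setoid.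
Set Implicit Arguments. Unset Strict Implicit. Unset Printing Implicit Defensive.
Import Order.TTheory GRing.Theory Num.Theory.
Local Open Scope ring_scope.

(* Inclusion: pad the vector with zeros, which block matrices [A 0; 0 0] keep at zero.
   Separation: L = { a^n } U { a^n b^n : n >= 1 } is recognised in dimension 2 by keeping
   2^(#a - #b) in the first coordinate and a constant 1 in the second, which lets the end
   marker reset the first coordinate to 1 after a^n. In dimension 1 the final step is
   multiplication by a scalar, so an accepted word pins down the vector reached after any of
   its prefixes. Among the |Q|+1 prefixes a, ..., a^(|Q|+1), which are all in L, two reach
   the same state and hence the same configuration; but a^i b^i distinguishes a^i from a^j. *)

Section Widen.
Variables (Sigma : Type) (k m : nat) (M : rtDBVA Sigma k).

Definition widen_rtDBVA : rtDBVA Sigma (k + m) :=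
  @RtDBVA Sigma (k + m) (st M)
    (fun q a => let: (q', A) := @delta _ _ M q a in (q', block_mx A 0 0 0))
    (q0 M) (Qa M) (row_mx (v0 M) 0).

Lemma widen_foldl s q v :
  foldl (@step _ _ widen_rtDBVA) (q, row_mx v 0) s =
  let: (q', u) := foldl (@step _ _ M) (q, v) s in (q', row_mx u 0).
Proof.
elim: s q v => [|a s IH] q v //=.
rewrite /step /=; case: (@delta _ _ M q a) => q' A.
by rewrite mul_row_block !mulmx0 !addr0; apply: IH.
Qed.

Lemma widen_accepts w : accepts widen_rtDBVA w <-> accepts M w.
Proof.
rewrite /accepts /run widen_foldl; case: foldl => q u /=.
split=> -[Qq [i [i0 ui]]]; split=> //; last first.
  by exists (lshift m i); rewrite row_mxEl.
case: (splitP i) => j Ej.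
- exists j; split; first by rewrite -Ej.
  by rewrite (_ : i = lshift m j) ?row_mxEl in ui; last exact: val_inj.
- rewrite (_ : i = rshift k j) ?row_mxEr ?mxE in ui; last exact: val_inj.
  by move/eqP: ui; rewrite eq_sym oner_eq0.
Qed.

End Widen.

Lemma rtDBVA_lang_widen (Sigma : Type) (k m : nat) (L : seq Sigma -> Prop) :
  rtDBVA_lang k L -> rtDBVA_lang (k + m) L.
Proof.
by case=> M HM; exists (widen_rtDBVA m M) => w; rewrite widen_accepts.
Qed.

Section Configurations.
Variables (Sigma : Type) (k : nat) (M : rtDBVA Sigma k).

Definition config_after (u : seq Sigma) : st M * 'rV[rat]_k :=
  foldl (@step _ _ M) (q0 M, v0 M) (Cent :: map (@Sym Sigma) u).

Definition accepts_from (c : st M * 'rV[rat]_k) (s : seq Sigma) : Prop :=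
  let c' := foldl (@step _ _ M) c (map (@Sym Sigma) s ++ [:: Dollar]) in
  c'.1 \in Qa M /\ exists i : 'I_k, nat_of_ord i = 0%N /\ c'.2 0 i = 1.

Lemma accepts_cat u s : accepts M (u ++ s) <-> accepts_from (config_after u) s.
Proof. by rewrite /accepts /run map_cat -catA /= foldl_cat. Qed.

Lemma foldl_step_linear s q :
  exists q' (P : 'M[rat]_k), forall v, foldl (@step _ _ M) (q, v) s = (q', v *m P).
Proof.
elim: s q => [|a s IH] q /=; first by exists q, 1%:M => v; rewrite mulmx1.
case: (@delta _ _ M q a) => q1 A; have [q' [P HP]] := IH q1.
by exists q', (A *m P) => v; rewrite /step /= HP mulmxA.
Qed.

End Configurations.

Lemma accepts_from1_inj (Sigma : Type) (M : rtDBVA Sigma 1) (c d : st M * 'rV[rat]_1) s :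
  c.1 = d.1 -> accepts_from c s -> accepts_from d s -> c = d.
Proof.
case: c d => q x [q' y] /= <-.
have [qf [P HP]] := @foldl_step_linear _ _ M (map (@Sym Sigma) s ++ [:: Dollar]) q.
rewrite /accepts_from !HP /= => -[_ [i [_ xP]]] [_ [j [_ yP]]].
rewrite (ord1 i) mxE big_ord1 in xP; rewrite (ord1 j) mxE big_ord1 in yP.
have P0 : P 0 0 != 0 by apply: contra_eq_neq xP => ->; rewrite mulr0 eq_sym oner_eq0.
congr pair; apply/rowP => l; rewrite (ord1 l).
by apply: (mulIf P0); rewrite xP yP.
Qed.

Lemma rtDBVA1_lang_collision (Sigma : Type) (L : seq Sigma -> Prop)
    (u : nat -> seq Sigma) (s : seq Sigma) :
  rtDBVA_lang 1 L -> (forall n, L (u n ++ s)) ->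
  exists i j : nat, i != j /\ forall t, L (u i ++ t) -> L (u j ++ t).
Proof.
case=> M HM uL.
pose f (n : 'I_#|st M|.+1) := (config_after M (u n)).1.
have /injectivePn [i [j ij fij]] : ~~ injectiveb f.
  by apply/injectiveP => /leq_card; rewrite card_ord ltnn.
have cfg_ij : config_after M (u i) = config_after M (u j).
  by apply: (accepts_from1_inj fij); rewrite -accepts_cat -HM.
by exists i, j; split=> // t; rewrite !HM !accepts_cat cfg_ij.
Qed.

Definition frame (x : rat) : 'rV[rat]_2 := \row_j (if j == ord0 then x else 1).

Definition scale_first (c : rat) : 'M[rat]_2 := diag_mx (frame c).

Definition reset_first : 'M[rat]_2 := \matrix_(i, j) (i != ord0)%:R.

Lemma frame_scale_first x c : frame x *m scale_first c = frame (x * c).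
Proof. by apply/rowP => j; rewrite mul_mx_diag !mxE; case: eqP; rewrite ?mulr1. Qed.

Lemma frame_reset_first x : frame x *m reset_first = frame 1.
Proof.
apply/rowP => j; rewrite !mxE !big_ord_recl big_ord0 !mxE /=.
by case: eqP; rewrite mulr0 mul1r !addr0 add0r.
Qed.

Lemma frame00 x : frame x 0 ord0 = x.
Proof. by rewrite mxE. Qed.

Definition reading_a : 'I_3 := ord0.
Definition reading_b : 'I_3 := @Ordinal 3 1 isT.
Definition rejecting : 'I_3 := @Ordinal 3 2 isT.

(* [true] is the letter a and [false] the letter b. *)
Definition anbn_delta (q : 'I_3) (c : tape_sym bool) : 'I_3 * 'M[rat]_2 :=
  match c with
  | Cent => (q, 1%:M)
  | Sym true => if q == reading_a then (reading_a, scale_first 2) else (rejecting, 1%:M)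
  | Sym false => if q == rejecting then (rejecting, 1%:M) else (reading_b, scale_first 2^-1)
  | Dollar => if q == reading_a then (reading_a, reset_first) else (q, 1%:M)
  end.

Definition anbn_rtDBVA : rtDBVA bool 2 :=
  @RtDBVA bool 2 _ anbn_delta reading_a [set reading_a; reading_b] (frame 1).

Lemma anbn_foldl_a n x :
  foldl (@step _ _ anbn_rtDBVA) (reading_a, frame x) (nseq n (Sym true)) =
  (reading_a, frame (x * 2 ^+ n)).
Proof.
elim: n x => [|n IH] x /=; first by rewrite mulr1.
by rewrite frame_scale_first IH exprS mulrA.
Qed.

Lemma anbn_config_after n :
  config_after anbn_rtDBVA (nseq n true) = (reading_a, frame (2 ^+ n)).
Proof. by rewrite /config_after /= map_nseq /step /= mulmx1 anbn_foldl_a mul1r. Qed.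

Lemma anbn_accepts_a n : accepts anbn_rtDBVA (nseq n true).
Proof.
rewrite -[nseq n true]cats0 accepts_cat anbn_config_after /accepts_from /= /step /=.
by rewrite frame_reset_first !inE eqxx; split=> //; exists ord0; rewrite frame00.
Qed.

Local Arguments step : simpl never.

Lemma anbn_step_b q x : q != rejecting ->
  @step _ _ anbn_rtDBVA (q, frame x) (Sym false) = (reading_b, frame (x / 2)).
Proof. by move=> q_ok; rewrite /step /= (negbTE q_ok) frame_scale_first. Qed.

Lemma anbn_foldl_b n q x : q != rejecting ->
  foldl (@step _ _ anbn_rtDBVA) (q, frame x) (nseq n.+1 (Sym false)) =
  (reading_b, frame (x / 2 ^+ n.+1)).
Proof.
move=> q_ok; elim: n => [|n IH]; first by rewrite /= anbn_step_b.
rewrite -[n.+2]addn1 nseqD foldl_cat IH /= anbn_step_b //.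
by rewrite addn1 [2 ^+ n.+2]exprSr invfM mulrA.
Qed.

Lemma anbn_accepts_ab m n :
  accepts anbn_rtDBVA (nseq m true ++ nseq n.+1 false) <-> m = n.+1.
Proof.
rewrite accepts_cat anbn_config_after /accepts_from map_nseq foldl_cat anbn_foldl_b //.
rewrite /= /step /= mulmx1 !inE eqxx orbT.
have pow2_neq0 l : (2 : rat) ^+ l != 0 by rewrite expf_neq0.
split=> [[_ [i [i0]]] | ->]; last by split=> //; exists ord0; rewrite frame00 divff.
rewrite (_ : i = ord0) ?frame00; last exact: val_inj.
move/divr1_eq/eqP; rewrite -!natrX eqr_nat => /eqP; exact: expnI.
Qed.

Theorem theorem11 :
  (forall (Sigma : finType) (L : seq Sigma -> Prop),
      rtDBVA_lang 1 L -> rtDBVA_lang 2 L) /\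
  (exists (Sigma : finType) (L : seq Sigma -> Prop),
      rtDBVA_lang 2 L /\ ~ rtDBVA_lang 1 L).
Proof.
split=> [Sigma L|]; first exact: (@rtDBVA_lang_widen _ 1 1).
exists bool, (accepts anbn_rtDBVA); split; first by exists anbn_rtDBVA.
move=> /(@rtDBVA1_lang_collision _ _ (fun n => nseq n.+1 true) [::]) [n|i [j [ij a_ij]]].
  by rewrite cats0; apply: anbn_accepts_a.
have /anbn_accepts_ab[ji] := a_ij _ ((anbn_accepts_ab i.+1 i).2 erefl).
by rewrite ji eqxx in ij.
Qed.
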